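(* Let $s\ge 1$ and let $n_1,\dots,n_s,k_1,\dots,k_s$ be positive integers. Then there exist finitely many polynomials $g_i\in\mathbb{Q}[X]$ and positive integers $m_i,\ell_i$ with $\ell_i\le n_1+\cdots+n_s$ for every $i$, such that $$\frac{1}{(X^{k_1}-1)^{n_1}\cdots(X^{k_s}-1)^{n_s}}=\sum_{i}\frac{g_i}{(X^{m_i}-1)^{\ell_i}}$$ in the field of rational functions $\mathbb{Q}(X)$. *)

From HB Require Import structures.
From mathcomp Require Import all_boot all_order all_algebra fraction.
Set Implicit Arguments. Unset Strict Implicit. Unset Printing Implicit Defensive.
Import Order.TTheory GRing.Theory Num.Theory.
(* Q(X) is modelled as {fraction {poly rat}}, with the embedding p%:F. *)
Notation "x %:F" := (@FracField.tofrac _ x) : ring_scope.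

From HB Require Import structures.
From mathcomp Require Import all_boot all_order all_algebra fraction.
Import Order.TTheory GRing.Theory Num.Theory.
Local Open Scope ring_scope.

(* A single term suffices: with M = k_1 ... k_s, each X^(k_j) - 1 divides
   X^M - 1, so (X^M - 1)^(n_1 + ... + n_s) = P g where P is the given
   denominator, hence 1/P = g / (X^M - 1)^(n_1 + ... + n_s). *)

Section XnSub1.

Variable R : comNzRingType.

Lemma Xn_sub1_dvdM (k d : nat) :
  exists q : {poly R}, 'X^(k * d) - 1 = ('X^k - 1) * q.
Proof.
exists (\sum_(i < d) ('X^k) ^+ (d.-1 - i) * 1 ^+ i).
by rewrite -subrXX exprM expr1n.
Qed.

Lemma Xn_sub1_neq0 (m : nat) : (0 < m)%N -> ('X^m - 1 : {poly R}) != 0.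
Proof. by move=> m_gt0; rewrite -polyC1 monic_neq0 // monicXnsubC. Qed.

Lemma prod_Xn_sub1_common_multiple (I : finType) (k n : I -> nat) :
  exists g : {poly R},
    ('X^(\prod_i k i) - 1) ^+ (\sum_i n i) = \prod_i ('X^(k i) - 1) ^+ n i * g.
Proof.
have /fin_all_exists [q qE] :
    forall i, exists q : {poly R}, 'X^(\prod_j k j) - 1 = ('X^(k i) - 1) * q.
  by move=> i; rewrite (bigD1 i) //=; apply: Xn_sub1_dvdM.
exists (\prod_i q i ^+ n i).
rewrite -prodrXr -big_split /=; apply: eq_bigr => i _.
by rewrite (qE i) exprMn.
Qed.

End XnSub1.

Lemma tofracV_extend (R : idomainType) (p g : R) :
  p * g != 0 -> (p%:F)^-1 = g%:F / (p * g)%:F.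
Proof.
move=> pg_neq0; have g_neq0 : g%:F != 0.
  by rewrite tofrac_eq0; apply: contraNneq pg_neq0 => ->; rewrite mulr0.
by rewrite rmorphM invfM mulrCA mulfV ?mulr1.
Qed.

Theorem lemma2p1 (s : nat) (hs : (1 <= s)%N) (n k : 'I_s -> nat)
    (hn : forall j, (0 < n j)%N) (hk : forall j, (0 < k j)%N) :
  exists r : seq ({poly rat} * nat * nat),
    (forall t, t \in r ->
        [/\ (0 < t.1.2)%N, (0 < t.2)%N & (t.2 <= \sum_(j < s) n j)%N]) /\
    (\prod_(j < s) ((('X^(k j) - 1) ^+ (n j) : {poly rat})%:F))^-1
      = \sum_(t <- r) (t.1.1)%:F / ((('X^(t.1.2) - 1) ^+ t.2 : {poly rat})%:F).
Proof.
set M := (\prod_(j < s) k j)%N; set L := (\sum_(j < s) n j)%N.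
have M_gt0 : (0 < M)%N by apply: prodn_gt0.
have L_gt0 : (0 < L)%N by rewrite /L (bigD1 (Ordinal hs)) //= ltn_addr.
have [g gE] := @prod_Xn_sub1_common_multiple rat _ k n.
exists [:: (g, M, L)]; split.
  by move=> t; rewrite inE => /eqP -> /=.
rewrite big_seq1 /= -rmorph_prod /= -/M -/L gE -tofracV_extend // -gE.
by rewrite expf_neq0 // Xn_sub1_neq0.
Qed.
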